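(* Let $r\ge 1$ and $n\ge 3r+4$ be integers. Then $\rho(K_{3,n-3})>\rho(H_{n,r})$.
   Context: $\rho$ denotes the spectral radius (largest adjacency eigenvalue). $K_1\vee rK_3$ is the join of a single vertex with $r$ disjoint triangles; let $u$ be its vertex of degree $3r$ (any vertex if $r=1$). In $K_{3,n-3r-3}$ (complete bipartite with parts of sizes $3$ and $n-3r-3$), let $vw$ be an edge where $v$ has degree $n-3r-3$ and $w$ has degree $3$. $H_{n,r}$ is the graph obtained from the disjoint union of $K_1\vee rK_3$ and $K_{3,n-3r-3}$ by identifying $u$ with $v$. *)

From HB Require Import structures.
From mathcomp Require Import all_boot all_order all_algebra.
From mathcomp Require Import classical_sets reals.
Set Implicit Arguments. Unset Strict Implicit. Unset Printing Implicit Defensive.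
Import Order.TTheory GRing.Theory Num.Theory.

Definition adj_mx (R : realType) (n : nat) (e : nat -> nat -> bool) : 'M[R]_n :=
  \matrix_(i < n, j < n) ((e i j : nat)%:R)%R.

(* Spectral radius = largest eigenvalue of the adjacency matrix
   (the eigenvalue set of a real symmetric matrix is finite and nonempty,
   so its supremum is its maximum). *)
Definition spectral_radius (R : realType) (n : nat) (A : 'M[R]_n) : R :=
  sup [set x : R | eigenvalue A x].

Definition K3_edge (i j : nat) : bool :=
  ((i < 3) && (3 <= j)) || ((j < 3) && (3 <= i)).

(* H_{n,r} on vertices 0..n-1:
   - 0 is the identified vertex u = v;
   - triangles: {3k+1, 3k+2, 3k+3} for k < r (these 3r vertices together with 0
     form K_1 \/ rK_3, 0 being the vertex of degree 3r);
   - K_{3,n-3r-3}: the part of size 3 is {0, 3r+1, 3r+2} (v = 0 has degree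
     n-3r-3), the other part is {3r+3, ..., n-1}. *)
Definition H_edge (r : nat) (i j : nat) : bool :=
  let tri k := (1 <= k) && (k <= 3 * r) in
  let part3 k := [|| k == 0, k == 3 * r + 1 | k == 3 * r + 2] in
  let partm k := 3 * r + 3 <= k in
  (i != j) &&
  [|| (i == 0) && tri j, (j == 0) && tri i,
      [&& tri i, tri j & (i.-1 %/ 3 == j.-1 %/ 3)],
      part3 i && partm j | part3 j && partm i].

From HB Require Import structures.
From mathcomp Require Import all_boot all_order all_algebra.
From mathcomp Require Import classical_sets reals.
From mathcomp Require Import zify ring lra.
Import Order.TTheory GRing.Theory Num.Theory.
Local Open Scope ring_scope.

(* A positive weight vector y with y A <= th y (Collatz-Wielandt) bounds every
   eigenvalue of a nonnegative matrix A by th.  For H_{n,r} take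
   th = sqrt(3(n-3) - 1) and weights a on u, b on the triangle vertices, c on
   the two other vertices of the 3-part and d on the large part, chosen so that
   every column is tight except that of u, where the slack needs th >= 16/5,
   which holds as th^2 >= 11.  Thus rho(H_{n,r}) <= sqrt(3(n-3) - 1), while
   sqrt(3(n-3)) is an eigenvalue of K_{3,n-3}: its eigenvector is n - 3 on the
   small part and sqrt(3(n-3)) on the large one. *)

Lemma normr_eigenvalue_le_of_subinvariant {R : realFieldType} {n} {A : 'M[R]_n}
    (y : 'I_n -> R) {c mu : R} :
  (forall i j, 0 <= A i j) -> (forall i, 0 < y i) ->
  (forall j, \sum_i y i * A i j <= c * y j) -> eigenvalue A mu -> `|mu| <= c.
Proof.
move=> A_ge0 y_gt0 yA_le /eigenvalueP [v vA v_neq0].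
have [i0 vi0_neq0] : exists i0, v 0 i0 != 0.
  apply/existsP; apply: contraNT v_neq0 => /existsPn v0.
  by apply/eqP/matrixP => i k; rewrite mxE (ord1 i); apply/eqP/negPn/v0.
pose F i := `|v 0 i| / y i.
have [j _ F_max] := @arg_maxP _ R _ i0 xpredT F isT.
have Fj_gt0 : 0 < F j.
  by apply: lt_le_trans (F_max i0 isT); rewrite divr_gt0 ?normr_gt0.
have vj : `|v 0 j| = F j * y j by rewrite divfK ?gt_eqF.
have vj_gt0 : 0 < `|v 0 j| by rewrite vj mulr_gt0.
have vAj : \sum_i v 0 i * A i j = mu * v 0 j.
  by move/matrixP: vA => /(_ 0 j); rewrite !mxE.
rewrite -(ler_pM2r vj_gt0) -normrM -vAj.
apply: le_trans (ler_norm_sum _ _ _) _.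
apply: (@le_trans _ _ (\sum_i F j * (y i * A i j))).
  apply: ler_sum => i _; rewrite normrM (ger0_norm (A_ge0 i j)) mulrA.
  by rewrite ler_wpM2r // -ler_pdivrMr ?y_gt0 //; apply: F_max.
by rewrite -big_distrr /= vj mulrCA ler_pM2l.
Qed.

Definition ind_range {R : ringType} (lo hi : nat) (x : R) (i : nat) : R :=
  if (lo <= i < hi)%N then x else 0.

Lemma sum_ind_range (R : ringType) n lo hi (x : R) :
  \sum_(i < n) ind_range lo hi x i = (minn hi n - lo)%:R * x.
Proof.
elim: n => [|n IH]; first by rewrite big_ord0 minn0 sub0n mul0r.
rewrite big_ord_recr /= IH /ind_range; case: ifP => i_in.
  have -> : (minn hi n.+1 - lo = (minn hi n - lo) + 1)%N by lia.
  by rewrite natrD mulrDl mul1r.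
by rewrite addr0; congr (_%:R * _); lia.
Qed.

Definition H_weight {R : ringType} (r : nat) (a b c d : R) (i : nat) : R :=
  if (i == 0)%N then a else if (i <= 3 * r)%N then b
  else if (i <= 3 * r + 2)%N then c else d.

Ltac entrywise :=
  move=> i _; have := ltn_ord i;
  rewrite !mxE ?/ind_range ?/H_weight ?/H_edge ?/K3_edge /nat_of_bool => i_lt_n;
  repeat case: ifP => ?; rewrite ?mulr1 ?mulr0 ?addr0 ?add0r //; exfalso; lia.

Lemma H_weighted_colsum (R : realType) n r (a b c d : R) (j : 'I_n) :
  (3 * r + 1 <= n)%N ->
  \sum_(i < n) H_weight r a b c d i * adj_mx R n (H_edge r) i j =
  if (j == 0 :> nat)%N then (3 * r)%:R * b + (n - 3 * r - 3)%:R * d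
  else if (j <= 3 * r)%N then a + 2 * b
  else if (j <= 3 * r + 2)%N then (n - 3 * r - 3)%:R * d
  else a + 2 * c.
Proof.
move=> rn; have j_lt_n := ltn_ord j.
case: ifP => j0.
  rewrite (eq_bigr (fun i : 'I_n => ind_range 1 (3 * r + 1) b i +
                                    ind_range (3 * r + 3) n d i)); last by entrywise.
  by rewrite big_split /= !sum_ind_range minnn; congr (_%:R * _ + _%:R * _); lia.
case: ifP => j1.
  set q := (j.-1 %/ 3)%N.
  rewrite (eq_bigr (fun i : 'I_n => ind_range 0 1 a i +
                                    ind_range (3 * q + 1) j b i +
                                    ind_range (j + 1) (3 * q + 4) b i));
    last by rewrite /q; entrywise.
  rewrite !big_split /= !sum_ind_range -addrA -mulrDl -natrD.
  have -> : (minn 1 n - 0 = 1)%N by lia.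
  by rewrite mul1r; congr (_ + _%:R * _); rewrite /q; lia.
case: ifP => j2.
  rewrite (eq_bigr (fun i : 'I_n => ind_range (3 * r + 3) n d i)); last by entrywise.
  by rewrite sum_ind_range minnn; congr (_%:R * _); lia.
rewrite (eq_bigr (fun i : 'I_n => ind_range 0 1 a i +
                                  ind_range (3 * r + 1) (3 * r + 3) c i));
  last by entrywise.
rewrite big_split /= !sum_ind_range.
have -> : (minn 1 n - 0 = 1)%N by lia.
by rewrite mul1r; congr (_ + _%:R * _); lia.
Qed.

Lemma ge_16_5_of_sqr_ge11 (R : realFieldType) (x : R) :
  0 <= x -> 11 <= x ^+ 2 -> 16 / 5 <= x.
Proof.
move=> x_ge0 x_sq; rewrite leNgt; apply/negP => x_lt.
have : 0 < (16 / 5 - x) * (16 / 5 + x) by apply: mulr_gt0; lra.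
have : x ^+ 2 = x * x by rewrite expr2.
lra.
Qed.

Lemma test_weights_gt0 (R : realFieldType) (th m k : R) :
  1 <= m -> 1 <= k -> 0 <= th -> th ^+ 2 = 3 * m + 9 * k - 1 ->
  [/\ 0 < th ^+ 2 - 2 * m, 0 < (th - 2) * (th ^+ 2 - 2 * m),
      0 < m * (th - 2) & 0 < th * (th - 2)].
Proof.
move=> m_ge1 k_ge1 th_ge0 th_sq.
have th_gt2 : 0 < th - 2.
  by have := @ge_16_5_of_sqr_ge11 _ th th_ge0; rewrite th_sq; lra.
have b_gt0 : 0 < th ^+ 2 - 2 * m by rewrite th_sq; lra.
by split; rewrite // mulr_gt0 //; lra.
Qed.

Lemma test_weight_hub_le (R : realFieldType) (th m k : R) :
  1 <= m -> 1 <= k -> 0 <= th -> th ^+ 2 = 3 * m + 9 * k - 1 ->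
  3 * k * (th ^+ 2 - 2 * m) + m * (th * (th - 2))
  <= th * ((th - 2) * (th ^+ 2 - 2 * m)).
Proof.
move=> m_ge1 k_ge1 th_ge0 th_sq.
have slack : 0 <= th * (6 * k - 1) - 18 * k + 2.
  have : 0 <= (th - 16 / 5) * (6 * k - 1).
    by apply: mulr_ge0; have := @ge_16_5_of_sqr_ge11 _ th th_ge0; rewrite th_sq; lra.
  lra.
have : th * ((th - 2) * (th ^+ 2 - 2 * m))
       - (3 * k * (th ^+ 2 - 2 * m) + m * (th * (th - 2)))
     = th * (th * (6 * k - 1) - 18 * k + 2) + 6 * k * m
       + (th ^+ 2 - (3 * m + 9 * k - 1)) * (th ^+ 2 - 2 * th) by ring.
rewrite th_sq subrr mul0r addr0.
have : 0 <= th * (th * (6 * k - 1) - 18 * k + 2) by exact: mulr_ge0.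
have : 0 <= 6 * k * m by apply: mulr_ge0; lra.
lra.
Qed.

Lemma H_eigenvalue_le (R : realType) n r mu :
  (1 <= r)%N -> (3 * r + 4 <= n)%N -> eigenvalue (adj_mx R n (H_edge r)) mu ->
  mu <= Num.sqrt (3 * (n - 3) - 1)%:R.
Proof.
move=> r_ge1 rn mu_eig.
set th := Num.sqrt _; set m : R := (n - 3 * r - 3)%:R; set k : R := r%:R.
have m_ge1 : 1 <= m by rewrite ler1n; lia.
have k_ge1 : 1 <= k by rewrite ler1n.
have th_ge0 : 0 <= th := sqrtr_ge0 _.
have th_sq : th ^+ 2 = 3 * m + 9 * k - 1.
  have e : (3 * (n - 3) - 1 + 1 = 3 * (n - 3 * r - 3) + 9 * r)%N by lia.
  have := congr1 (fun x => x%:R : R) e.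
  by rewrite sqr_sqrtr ?ler0n // !natrD -/m -/k; lra.
pose b := th ^+ 2 - 2 * m; pose a := (th - 2) * b.
pose c := m * (th - 2); pose d := th * (th - 2).
have [b_gt0 a_gt0 c_gt0 d_gt0] :=
  @test_weights_gt0 _ th m k m_ge1 k_ge1 th_ge0 th_sq.
apply: le_trans (ler_norm mu) _.
apply: (normr_eigenvalue_le_of_subinvariant
          (fun i : 'I_n => H_weight r a b c d i) _ _ _ mu_eig).
- by move=> i j; rewrite mxE ler0n.
- by move=> i; rewrite /H_weight; repeat case: ifP.
move=> j; rewrite H_weighted_colsum; last by lia.
rewrite /H_weight -/m; case: ifP => _.
  by rewrite natrM -/k; apply: test_weight_hub_le.
case: ifP => _; first by rewrite [X in X <= _](_ : _ = th * b) // /a; ring.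
case: ifP => _; first by rewrite [X in X <= _](_ : _ = th * c) // /c /d; ring.
by rewrite [X in X <= _](_ : _ = th * d) // /a /b /c /d; ring.
Qed.

Lemma spectral_radius_le (R : realType) n (A : 'M[R]_n) (c : R) :
  0 <= c -> (forall mu, eigenvalue A mu -> mu <= c) -> spectral_radius A <= c.
Proof.
move=> c_ge0 eig_le; rewrite /spectral_radius.
have [-> | /set0P eig_ne0] := eqVneq [set mu : R | eigenvalue A mu]%classic set0.
  by rewrite sup0.
by apply: ge_sup eig_ne0 _ => mu; apply: eig_le.
Qed.

Lemma eigenvalue_adj_mx_le (R : realType) n e mu :
  eigenvalue (adj_mx R n e) mu -> mu <= n%:R.
Proof.
move=> mu_eig; apply: le_trans (ler_norm mu) _.
apply: (normr_eigenvalue_le_of_subinvariant (fun=> 1) _ _ _ mu_eig).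
- by move=> i j; rewrite mxE ler0n.
- by move=> i; exact: ltr01.
move=> j; rewrite mulr1 -[n in n%:R]card_ord -sumr_const.
by apply: ler_sum => i _; rewrite mul1r mxE; case: (e i j); rewrite ?lexx ?ler01.
Qed.

Lemma eigenvalue_adj_mx_le_spectral_radius (R : realType) n e mu :
  eigenvalue (adj_mx R n e) mu -> mu <= spectral_radius (adj_mx R n e).
Proof.
move=> mu_eig; apply: ub_le_sup mu_eig.
by exists n%:R => x; apply: eigenvalue_adj_mx_le.
Qed.

Lemma K3_eigenvalue (R : realType) n :
  (3 < n)%N -> eigenvalue (adj_mx R n K3_edge) (Num.sqrt (3 * (n - 3))%:R).
Proof.
move=> n_gt3; set la := Num.sqrt _.
have la_sq : la ^+ 2 = (3 * (n - 3))%:R by rewrite sqr_sqrtr ?ler0n.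
apply/eigenvalueP; exists (\row_(i < n) if (i < 3)%N then (n - 3)%:R else la).
  apply/matrixP => k j; rewrite !mxE; case: (ltnP j 3) => j_lt3.
    rewrite (eq_bigr (fun i : 'I_n => ind_range 3 n la i)); last by entrywise.
    by rewrite sum_ind_range minnn mulrC.
  rewrite (eq_bigr (fun i : 'I_n => ind_range 0 3 (n - 3)%:R i)); last by entrywise.
  by rewrite sum_ind_range -expr2 la_sq -natrM; congr _%:R; lia.
apply: contraTneq isT => /matrixP/(_ 0 (Ordinal (ltnW n_gt3))).
by rewrite !mxE /= => /eqP; rewrite pnatr_eq0; lia.
Qed.

Theorem lemma4p3 (R : realType) (n r : nat) :
  (1 <= r)%N -> (3 * r + 4 <= n)%N ->
  spectral_radius (adj_mx R n (H_edge r)) < spectral_radius (adj_mx R n K3_edge).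
Proof.
move=> r_ge1 rn.
apply: (@le_lt_trans _ _ (Num.sqrt (3 * (n - 3) - 1)%:R)).
  apply: spectral_radius_le; first exact: sqrtr_ge0.
  by move=> mu; apply: H_eigenvalue_le.
apply: (@lt_le_trans _ _ (Num.sqrt (3 * (n - 3))%:R)).
  by rewrite ltr_sqrt ?ltr0n ?ltr_nat; lia.
by apply/eigenvalue_adj_mx_le_spectral_radius/K3_eigenvalue; lia.
Qed.
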